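(* Let $P\in\mathbb{N}_0^{n\times n}$ be an incidence matrix that is monomial (every row and every column has exactly one non-zero entry). If two of its entries are greater than $1$, then $P$ exclusively represents reducible morphisms.
   Context: Let $\Sigma=\{a_1,\dots,a_n\}$. A morphism $\varphi:\Sigma^+\to\Sigma^+$ (non-empty images) is Parikh-positive if every letter occurs in $\varphi(a_1)\cdots\varphi(a_n)$. Its incidence matrix is $P(\varphi)=(m_{i,j})$ with $m_{i,j}=|\varphi(a_j)|_{a_i}$. An automorphism is an injective morphism mapping each letter to a single letter; a morphism is reducible if it equals $\psi_2\circ\psi_1$ with neither $\psi_1,\psi_2$ an automorphism. An incidence matrix $P$ exclusively represents reducible morphisms if every Parikh-positive morphism $\varphi$ with $P(\varphi)=P$ is reducible. *)

From mathcomp Require Import all_boot all_algebra.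
Set Implicit Arguments. Unset Strict Implicit. Unset Printing Implicit Defensive.

(* Alphabet Sigma = {a_1,...,a_n} is 'I_n; words are seq 'I_n.
   A morphism Sigma^+ -> Sigma^+ is determined by the images of letters,
   which must be non-empty words. *)
Definition morph (n : nat) := 'I_n -> seq 'I_n.

Definition nonerasing n (phi : morph n) : Prop := forall a, phi a != [::].

Definition morph_word n (phi : morph n) (w : seq 'I_n) : seq 'I_n :=
  flatten (map phi w).

Definition morph_comp n (psi2 psi1 : morph n) : morph n :=
  fun a => morph_word psi2 (psi1 a).

Definition parikh_positive n (phi : morph n) : Prop :=
  forall b : 'I_n, b \in morph_word phi (enum 'I_n).

Definition incidence n (phi : morph n) : 'M[nat]_n :=
  \matrix_(i, j) count_mem i (phi j).

Definition automorphism n (phi : morph n) : Prop :=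
  (forall a, size (phi a) = 1) /\ injective phi.

Definition reducible n (phi : morph n) : Prop :=
  exists psi1 psi2 : morph n,
    [/\ nonerasing psi1, nonerasing psi2,
        ~ automorphism psi1, ~ automorphism psi2 &
        forall a, phi a = morph_comp psi2 psi1 a].

Definition exclusively_reducible n (P : 'M[nat]_n) : Prop :=
  forall phi : morph n, nonerasing phi -> parikh_positive phi ->
    incidence phi = P -> reducible phi.

Definition monomial n (P : 'M[nat]_n) : Prop :=
  (forall i, #|[set j | P i j != 0%N]| = 1%N) /\
  (forall j, #|[set i | P i j != 0%N]| = 1%N).

From mathcomp Require Import all_boot all_algebra.

Set Implicit Arguments.
Unset Strict Implicit.
Unset Printing Implicit Defensive.

(* A column of a monomial incidence matrix has a single non-zero entry, so the
   image of the corresponding letter a is a power x^k of one letter.  If k > 1,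
   phi factors through a |-> a^k (other letters fixed) followed by a |-> x
   (other letters mapped as by phi).  The first factor is not an automorphism
   because k > 1, the second because it agrees with phi on the column of the
   other entry > 1, whose image is therefore not a single letter.  The two
   entries lie in different columns since each column has only one non-zero
   entry. *)

Lemma flatten_nseq1 (T : Type) k (y : T) : flatten (nseq k [:: y]) = nseq k y.
Proof. by elim: k => //= k ->. Qed.

Lemma card1_nseq (T : finType) (w : seq T) :
  #|w| = 1 -> exists x, w = nseq (size w) x.
Proof.
move/eqP/card1P=> [x wx]; exists x.
by apply/all_pred1P/allP=> y; rewrite wx.
Qed.

Lemma incidence_neq0 n (phi : morph n) i j :
  (incidence phi i j != 0) = (i \in phi j).
Proof. by rewrite mxE -lt0n -has_count has_pred1. Qed.

Lemma incidence_col_card n (phi : morph n) j :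
  #|[set i | incidence phi i j != 0]| = #|phi j|.
Proof. by rewrite -cardsE; apply: eq_card=> i; rewrite !inE incidence_neq0. Qed.

Lemma incidence_size n (phi : morph n) i j : incidence phi i j <= size (phi j).
Proof. by rewrite mxE count_size. Qed.

Lemma automorphismN n (psi : morph n) a : 1 < size (psi a) -> ~ automorphism psi.
Proof. by move=> psi_a [size1 _]; rewrite size1 in psi_a. Qed.

Section PowerFactorization.

Variables (n : nat) (a : 'I_n).

Definition power_morph (k : nat) : morph n :=
  fun c => if c == a then nseq k a else [:: c].

Definition retarget (phi : morph n) (x : 'I_n) : morph n :=
  fun c => if c == a then [:: x] else phi c.

Lemma morph_comp_retarget_power (phi : morph n) x k :
  phi a = nseq k x -> forall c, phi c = morph_comp (retarget phi x) (power_morph k) c.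
Proof.
move=> phi_a c; rewrite /morph_comp /morph_word /power_morph /retarget.
case: eqP => [->|/eqP c_a] /=; last by rewrite (negbTE c_a) cats0.
by rewrite map_nseq eqxx flatten_nseq1.
Qed.

Lemma reducible_power_letter (phi : morph n) x k b :
  nonerasing phi -> 1 < k -> phi a = nseq k x ->
  b != a -> 1 < size (phi b) -> reducible phi.
Proof.
move=> phi_ne k_gt1 phi_a b_a phi_b.
exists (power_morph k), (retarget phi x); split.
- move=> c; rewrite /power_morph; case: ifP => // _.
  by rewrite -size_eq0 size_nseq -lt0n ltnW.
- by move=> c; rewrite /retarget; case: ifP.
- by apply: (@automorphismN _ _ a); rewrite /power_morph eqxx size_nseq.
- by apply: (@automorphismN _ _ b); rewrite /retarget (negbTE b_a).
- exact: morph_comp_retarget_power.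
Qed.

End PowerFactorization.

Theorem proposition19 (n : nat) (P : 'M[nat]_n) :
  monomial P ->
  (exists i1 j1 i2 j2, (i1, j1) != (i2, j2) /\
     (1 < P i1 j1)%N /\ (1 < P i2 j2)%N) ->
  exclusively_reducible P.
Proof.
move=> [_ col1] [i1 [j1 [i2 [j2 [ij_ne [P1 P2]]]]]] phi phi_ne _ phiP.
subst P.
have j_ne : j2 != j1.
  apply: contra ij_ne => /eqP j_eq; rewrite -j_eq in P1 *.
  have /card_le1_eqP eq_in_col : #|[set i | incidence phi i j2 != 0]| <= 1.
    by rewrite col1.
  by rewrite (eq_in_col i1 i2) // inE -lt0n ltnW.
have [x phi_j1] : exists x, phi j1 = nseq (size (phi j1)) x.
  by apply: card1_nseq; rewrite -incidence_col_card col1.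
apply: (reducible_power_letter phi_ne _ phi_j1 j_ne).
- exact: leq_trans P1 (incidence_size _ _ _).
- exact: leq_trans P2 (incidence_size _ _ _).
Qed.
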